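(* Let $(\mathcal{C},\Sigma)$ be an $n$-angulated category, $(\mathcal{A},\Sigma)$ a complete $n$-angulated subcategory, and $C$ an object of $\mathcal{C}$. If there exists an object $A$ of $\mathcal{A}$ such that $C\oplus A$ lies in $\mathcal{A}$, then $C$ lies in $\mathcal{A}$.
   Context: All categories are small. Fix an integer $n\ge 3$. Let $\mathcal{C}$ be an additive category with an automorphism $\Sigma$. An $n$-$\Sigma$-sequence in $\mathcal{C}$ is a diagram $A_1\xrightarrow{\alpha_1}A_2\xrightarrow{\alpha_2}\cdots\xrightarrow{\alpha_{n-1}}A_n\xrightarrow{\alpha_n}\Sigma A_1$. Its left rotation is $A_2\xrightarrow{\alpha_2}\cdots\xrightarrow{\alpha_n}\Sigma A_1\xrightarrow{(-1)^n\Sigma\alpha_1}\Sigma A_2$. A morphism from $(A_\bullet,\alpha)$ to $(B_\bullet,\beta)$ is a tuple $(\varphi_1,\dots,\varphi_n)$, $\varphi_i:A_i\to B_i$, with $\beta_i\varphi_i=\varphi_{i+1}\alpha_i$ for $1\le i\le n-1$ and $\beta_n\varphi_n=(\Sigma\varphi_1)\alpha_n$; it is an isomorphism if all $\varphi_i$ are isomorphisms. Direct sums of sequences are taken termwise. $(\mathcal{C},\Sigma)$ is $n$-angulated if it is equipped with a collection $\mathscr N$ of $n$-$\Sigma$-sequences, called $n$-angles, such that: (N1)(a) $\mathscr N$ is closed under direct sums, direct summands and isomorphisms of $n$-$\Sigma$-sequences; (b) for every object $A$, the trivial sequence $A\xrightarrow{1}A\to0\to\cdots\to0\to\Sigma A$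 is in $\mathscr N$; (c) every morphism $A_1\to A_2$ is the first morphism of some $n$-angle; (N2) an $n$-$\Sigma$-sequence is in $\mathscr N$ iff its left rotation is; (N3) given $n$-angles $(A_\bullet,\alpha),(B_\bullet,\beta)$ and $\varphi_1:A_1\to B_1$, $\varphi_2:A_2\to B_2$ with $\beta_1\varphi_1=\varphi_2\alpha_1$, there exist $\varphi_3,\dots,\varphi_n$ making $(\varphi_1,\dots,\varphi_n)$ a morphism; (N4) in (N3) the $\varphi_i$ can be chosen so that the mapping cone $A_2\oplus B_1\to A_3\oplus B_2\to\cdots\to\Sigma A_1\oplus B_n\to\Sigma A_2\oplus\Sigma B_1$, with maps $\left[\begin{smallmatrix}-\alpha_{i+1}&0\\ \varphi_{i+1}&\beta_i\end{smallmatrix}\right]$ ($1\le i\le n-1$) and last map $\left[\begin{smallmatrix}-\Sigma\alpha_1&0\\ \Sigma\varphi_1&\beta_n\end{smallmatrix}\right]$, is an $n$-angle. An additive functor $L:\mathcal{C}\to\mathcal{C}'$ between $n$-angulated categories $(\mathcal{C},\Sigma)$, $(\mathcal{C}',\Sigma')$ is $n$-angulated if there is a natural isomorphism $\eta:L\circ\Sigma\to\Sigma'\circ L$ such that for every $n$-angle $(A_\bullet,\alpha)$ in $\mathcal{C}$, $L A_1\xrightarrow{L\alpha_1}\cdots\xrightarrow{L\alpha_{n-1}}LA_n\xrightarrow{\eta\circ L\alpha_n}\Sigma'LA_1$ is an $n$-angle in $\mathcal{C}'$. An $n$-angulated subcategory of $(\mathcal{C},\Sigma)$ is a full subcategory $\mathcal{A}$,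 closed under isomorphisms, on which $\Sigma$ restricts to an automorphism, equipped with $n$-angles making $(\mathcal{A},\Sigma)$ an $n$-angulated category, such that the inclusion $\mathcal{A}\to\mathcal{C}$ is an $n$-angulated functor. A subcategory $\mathcal{A}$ is complete if whenever $A_1\to A_2\to\cdots\to A_n\to\Sigma A_1$ is an $n$-angle in $\mathcal{C}$ in which $n-1$ of the objects $A_1,\dots,A_n$ lie in $\mathcal{A}$, the remaining one also lies in $\mathcal{A}$. *)

From mathcomp Require Import all_boot.
Set Implicit Arguments. Unset Strict Implicit. Unset Printing Implicit Defensive.

Record preadd := PreAdd {
  Ob : Type;
  Hom : Ob -> Ob -> Type;
  comp : forall A B C, Hom B C -> Hom A B -> Hom A C;
  idm : forall A, Hom A A;
  addm : forall A B, Hom A B -> Hom A B -> Hom A B;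
  zerom : forall A B, Hom A B;
  oppm : forall A B, Hom A B -> Hom A B;
  compA : forall A B C D (h : Hom C D) (g : Hom B C) (f : Hom A B),
      comp h (comp g f) = comp (comp h g) f;
  comp1m : forall A B (f : Hom A B), comp (idm B) f = f;
  compm1 : forall A B (f : Hom A B), comp f (idm A) = f;
  addmA : forall A B (f g h : Hom A B), addm f (addm g h) = addm (addm f g) h;
  addmC : forall A B (f g : Hom A B), addm f g = addm g f;
  add0m : forall A B (f : Hom A B), addm (zerom A B) f = f;
  addNm : forall A B (f : Hom A B), addm (oppm f) f = zerom A B;
  compDl : forall A B C (g g' : Hom B C) (f : Hom A B),
      comp (addm g g') f = addm (comp g f) (comp g' f);
  compDr : forall A B C (g : Hom B C) (f f' : Hom A B),
      comp g (addm f f') = addm (comp g f) (comp g f')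
}.

Arguments comp {p A B C}.
Arguments idm {p}.
Arguments addm {p A B}.
Arguments zerom {p}.
Arguments oppm {p A B}.

Section PreaddDefs.
Variable C : preadd.

Definition isZeroObj (Z : Ob C) : Prop :=
  (forall Y (f g : Hom Z Y), f = g) /\ (forall Y (f g : Hom Y Z), f = g).

Definition isBiproduct (A B D : Ob C) (i1 : Hom A D) (i2 : Hom B D)
    (p1 : Hom D A) (p2 : Hom D B) : Prop :=
  [/\ comp p1 i1 = idm A, comp p2 i2 = idm B,
      comp p1 i2 = zerom B A, comp p2 i1 = zerom A B
    & addm (comp i1 p1) (comp i2 p2) = idm D].

Definition isIsoHom (A B : Ob C) (f : Hom A B) : Prop :=
  exists g : Hom B A, comp g f = idm A /\ comp f g = idm B.

End PreaddDefs.

Record addcat := AddCat {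
  PA :> preadd;
  zobj : Ob PA;
  zobj_zero : isZeroObj zobj;
  dsum : Ob PA -> Ob PA -> Ob PA;
  inj1 : forall A B, Hom A (dsum A B);
  inj2 : forall A B, Hom B (dsum A B);
  pr1 : forall A B, Hom (dsum A B) A;
  pr2 : forall A B, Hom (dsum A B) B;
  dsum_bip : forall A B, isBiproduct (inj1 A B) (inj2 A B) (pr1 A B) (pr2 A B)
}.

Arguments inj1 {a}. Arguments inj2 {a}. Arguments pr1 {a}. Arguments pr2 {a}.

Record autom (C : addcat) := Autom {
  Sob : Ob C -> Ob C;
  Shom : forall A B, Hom A B -> Hom (Sob A) (Sob B);
  Shom_comp : forall A B D (g : Hom B D) (f : Hom A B),
      Shom (comp g f) = comp (Shom g) (Shom f);
  Shom_id : forall A, Shom (idm A) = idm (Sob A);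
  Shom_add : forall A B (f g : Hom A B), Shom (addm f g) = addm (Shom f) (Shom g);
  Sob_bij : bijective Sob;
  Shom_bij : forall A B, bijective (@Shom A B)
}.

Arguments Shom {C} a {A B}.

(* n-Sigma-sequences.  Indices are 0-based: the objects are            *)
(* X 0, ..., X (n-1) (= A_1, ..., A_n of the paper); the i-th morphism  *)
(* (i < n) goes from X i to [tgt X i], which is X (i+1) for i < n-1     *)
(* and Sigma (X 0) for i = n-1.  Values at indices >= n are irrelevant *)
(* (all notions below only look at indices < n).                        *)
Section Seqs.
Variables (C : addcat) (S : autom C) (n : nat).

Definition tgt (X : nat -> Ob C) (i : nat) : Ob C :=
  if i.+1 < n then X i.+1 else Sob S (X 0).

Record nSigSeq := NSeq {
  sobj : nat -> Ob C;
  smor : forall i, Hom (sobj i) (tgt sobj i)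
}.

Definition tgtmap (X Y : nat -> Ob C) (phi : forall i, Hom (X i) (Y i)) (i : nat)
  : Hom (tgt X i) (tgt Y i) :=
  match i.+1 < n as b
    return Hom (if b then X i.+1 else Sob S (X 0)) (if b then Y i.+1 else Sob S (Y 0))
  with
  | true => phi i.+1
  | false => Shom S (phi 0)
  end.

Definition isMorAt (X Y : nSigSeq) (phi : forall i, Hom (sobj X i) (sobj Y i)) (i : nat) :=
  comp (smor Y i) (phi i) = comp (tgtmap phi i) (smor X i).

Definition isMor (X Y : nSigSeq) (phi : forall i, Hom (sobj X i) (sobj Y i)) :=
  forall i, i < n -> isMorAt phi i.

Definition isIsoSeq (X Y : nSigSeq) (phi : forall i, Hom (sobj X i) (sobj Y i)) :=
  isMor phi /\ forall i, i < n -> isIsoHom (phi i).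

Definition dsum_obj (X Y : nSigSeq) (i : nat) : Ob C := dsum (sobj X i) (sobj Y i).

Definition dsum_mor (X Y : nSigSeq) (i : nat) : Hom (dsum_obj X Y i) (tgt (dsum_obj X Y) i) :=
  addm (comp (tgtmap (fun j => inj1 (sobj X j) (sobj Y j)) i)
             (comp (smor X i) (pr1 (sobj X i) (sobj Y i))))
       (comp (tgtmap (fun j => inj2 (sobj X j) (sobj Y j)) i)
             (comp (smor Y i) (pr2 (sobj X i) (sobj Y i)))).

Definition dsumSeq (X Y : nSigSeq) : nSigSeq := NSeq (@dsum_mor X Y).

Definition sgnn (A B : Ob C) (f : Hom A B) : Hom A B := if odd n then oppm f else f.

Definition rot_mor (X : nSigSeq) (i : nat) : Hom (tgt (sobj X) i) (tgt (tgt (sobj X)) i) :=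
  match i.+1 < n as b
    return Hom (if b then sobj X i.+1 else Sob S (sobj X 0))
               (if b then tgt (sobj X) i.+1 else Sob S (tgt (sobj X) 0))
  with
  | true => smor X i.+1
  | false => sgnn (Shom S (smor X 0))
  end.

Definition rotSeq (X : nSigSeq) : nSigSeq := NSeq (@rot_mor X).

Definition triv_obj (A : Ob C) (i : nat) : Ob C :=
  match i with 0 | 1 => A | _ => zobj C end.

Definition triv_mor (A : Ob C) (i : nat) : Hom (triv_obj A i) (tgt (triv_obj A) i) :=
  match i as k return Hom (triv_obj A k) (tgt (triv_obj A) k) with
  | 0 => match 1 < n as b return Hom A (if b then A else Sob S A) with
         | true => idm A
         | false => zerom _ _
         end
  | _ => zerom _ _
  end.

Definition trivSeq (A : Ob C) : nSigSeq := NSeq (@triv_mor A).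

(* mapping cone of a morphism phi : X -> Y:                              *)
(* objects  tgt X i (+) Y i,  maps [[-a, 0], [phi', b]]                  *)
Definition cone_obj (X Y : nSigSeq) (i : nat) : Ob C := dsum (tgt (sobj X) i) (sobj Y i).

Definition shift_mor (X : nSigSeq) (i : nat) : Hom (tgt (sobj X) i) (tgt (tgt (sobj X)) i) :=
  match i.+1 < n as b
    return Hom (if b then sobj X i.+1 else Sob S (sobj X 0))
               (if b then tgt (sobj X) i.+1 else Sob S (tgt (sobj X) 0))
  with
  | true => smor X i.+1
  | false => Shom S (smor X 0)
  end.

Definition cone_mor (X Y : nSigSeq) (phi : forall i, Hom (sobj X i) (sobj Y i)) (i : nat)
  : Hom (cone_obj X Y i) (tgt (cone_obj X Y) i) :=
  addm
    (comp (tgtmap (fun j => inj1 (tgt (sobj X) j) (sobj Y j)) i)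
          (comp (oppm (shift_mor X i)) (pr1 (tgt (sobj X) i) (sobj Y i))))
    (comp (tgtmap (fun j => inj2 (tgt (sobj X) j) (sobj Y j)) i)
          (addm (comp (tgtmap phi i) (pr1 (tgt (sobj X) i) (sobj Y i)))
                (comp (smor Y i) (pr2 (tgt (sobj X) i) (sobj Y i))))).

Definition coneSeq (X Y : nSigSeq) (phi : forall i, Hom (sobj X i) (sobj Y i)) : nSigSeq :=
  NSeq (cone_mor phi).

(* replacing the last map alpha_n by eta o alpha_n *)
Definition twist_mor (eta : forall A, Hom (Sob S A) (Sob S A)) (X : nSigSeq) (i : nat)
  : Hom (sobj X i) (tgt (sobj X) i) :=
  (match i.+1 < n as b
     return Hom (sobj X i) (if b then sobj X i.+1 else Sob S (sobj X 0)) ->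
            Hom (sobj X i) (if b then sobj X i.+1 else Sob S (sobj X 0))
   with
   | true => fun f => f
   | false => fun f => comp (eta (sobj X 0)) f
   end) (smor X i).

Definition twistSeq eta (X : nSigSeq) : nSigSeq := NSeq (twist_mor eta X).

Definition castHom (A A' B B' : Ob C) (e : A = A') (e' : B = B') (g : Hom A B) : Hom A' B' :=
  match e in _ = a return Hom a B' with
  | erefl => match e' in _ = b return Hom A b with erefl => g end
  end.

Definition firstMor (X : nSigSeq) (A B : Ob C) (f : Hom A B) : Prop :=
  exists (e0 : sobj X 0 = A) (e1 : tgt (sobj X) 0 = B), castHom e0 e1 (smor X 0) = f.

Definition inSub (P : Ob C -> Prop) (X : nSigSeq) : Prop := forall i, i < n -> P (sobj X i).

(* Axioms (N1)-(N4) for a class N of n-Sigma-sequences of the full       *)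
(* subcategory with objects P (Sigma restricted to P).                   *)
Definition nAngulatedOn (P : Ob C -> Prop) (N : nSigSeq -> Prop) : Prop :=
  (forall X, N X -> inSub P X) /\
      (forall X Y, N X -> N Y -> N (dsumSeq X Y)) /\
      (forall X Y, inSub P X -> inSub P Y -> N (dsumSeq X Y) -> N X /\ N Y) /\
      (forall X Y phi, N X -> inSub P Y -> @isIsoSeq X Y phi -> N Y) /\
      (forall A, P A -> N (trivSeq A)) /\
      (forall A B (f : Hom A B), P A -> P B -> exists X, N X /\ firstMor X f) /\
      (forall X, inSub P X -> (N X <-> N (rotSeq X))) /\
      (forall X Y (phi : forall i, Hom (sobj X i) (sobj Y i)),
          N X -> N Y -> isMorAt phi 0 ->
          exists psi : forall i, Hom (sobj X i) (sobj Y i),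
            psi 0 = phi 0 /\ psi 1 = phi 1 /\ isMor psi) /\
      (forall X Y (phi : forall i, Hom (sobj X i) (sobj Y i)),
          N X -> N Y -> isMorAt phi 0 ->
          exists psi : forall i, Hom (sobj X i) (sobj Y i),
            [/\ psi 0 = phi 0, psi 1 = phi 1, isMor psi & N (coneSeq psi)]).

Definition nAngulated (N : nSigSeq -> Prop) : Prop := nAngulatedOn (fun _ => True) N.

(* A full, isomorphism-closed subcategory P on which S restricts to an   *)
(* automorphism, which is additive, carries an n-angulation NA, and such *)
(* that the inclusion functor is n-angulated (w.r.t. some natural iso    *)
(* eta : Sigma|_P -> Sigma|_P).                                           *)
Definition nAngSubcat (N : nSigSeq -> Prop) (P : Ob C -> Prop) (NA : nSigSeq -> Prop) : Prop :=
  (forall A B (f : Hom A B), isIsoHom f -> P A -> P B) /\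
      (forall A, P A <-> P (Sob S A)) /\
      (exists Z, P Z /\ isZeroObj Z) /\
      (forall A B, P A -> P B ->
         exists D (i1 : Hom A D) (i2 : Hom B D) (p1 : Hom D A) (p2 : Hom D B),
           P D /\ isBiproduct i1 i2 p1 p2) /\
      nAngulatedOn P NA /\
      exists eta : forall A, Hom (Sob S A) (Sob S A),
        [/\ (forall A, P A -> isIsoHom (eta A)),
            (forall A B (f : Hom A B), P A -> P B ->
                comp (Shom S f) (eta A) = comp (eta B) (Shom S f)) &
            (forall X, NA X -> N (twistSeq eta X))].

Definition completeSub (N : nSigSeq -> Prop) (P : Ob C -> Prop) : Prop :=
  forall X, N X -> forall j, j < n ->
    (forall i, i < n -> i != j -> P (sobj X i)) -> P (sobj X j).

End Seqs.

From mathcomp Require Import all_boot.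

Set Implicit Arguments.
Unset Strict Implicit.
Unset Printing Implicit Defensive.

(* Map the trivial n-angle of A to that of X by zero.  By (N4) the mapping
   cone of a suitable completion is an n-angle, and its objects are A (+) X,
   0 (+) X, then zero objects, then Sigma A (+) 0.  All but the second lie in
   the subcategory (A (+) X is isomorphic to X (+) A), so completeness puts
   0 (+) X, which is isomorphic to X, in it as well. *)

Section Preadditive.
Variable C : preadd.

Lemma addm_self_zerom A B (f : Hom (p:=C) A B) : f = addm f f -> f = zerom A B.
Proof.
move=> ff; have e : addm (oppm f) f = addm (oppm f) (addm f f) by rewrite -ff.
by rewrite addmA addNm add0m in e.
Qed.

Lemma compm0 A B D (f : Hom (p:=C) B D) : comp f (zerom A B) = zerom A D.
Proof. by apply: addm_self_zerom; rewrite -compDr add0m. Qed.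

Lemma comp0m A B D (f : Hom (p:=C) A B) : comp (zerom B D) f = zerom A D.
Proof. by apply: addm_self_zerom; rewrite -compDl add0m. Qed.

Lemma isBiproduct_sym A B D (i1 : Hom (p:=C) A D) (i2 : Hom B D) p1 p2 :
  isBiproduct i1 i2 p1 p2 -> isBiproduct i2 i1 p2 p1.
Proof. by case=> e1 e2 e3 e4 e5; split; rewrite // addmC. Qed.

Section BiproductComparison.
Variables (A B D D' : Ob C).
Variables (i1 : Hom A D) (i2 : Hom B D) (p1 : Hom D A) (p2 : Hom D B).
Variables (i1' : Hom A D') (i2' : Hom B D') (p1' : Hom D' A) (p2' : Hom D' B).
Hypotheses (bipD : isBiproduct i1 i2 p1 p2) (bipD' : isBiproduct i1' i2' p1' p2').

Lemma biproduct_comparisonK :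
  comp (addm (comp i1 p1') (comp i2 p2')) (addm (comp i1' p1) (comp i2' p2)) = idm D.
Proof.
case: bipD bipD' => _ _ _ _ e5 [e1' e2' e3' e4' _].
rewrite compDr !compDl -!compA !(compA p1') !(compA p2') e1' e2' e3' e4'.
by rewrite !comp1m !comp0m !compm0 [addm (comp i1 p1) _]addmC !add0m.
Qed.

End BiproductComparison.

Lemma biproduct_comparison_iso A B D D' (i1 : Hom (p:=C) A D) (i2 : Hom B D)
    p1 p2 (i1' : Hom A D') (i2' : Hom B D') p1' p2' :
  isBiproduct i1 i2 p1 p2 -> isBiproduct i1' i2' p1' p2' ->
  isIsoHom (addm (comp i1' p1) (comp i2' p2)).
Proof.
move=> bipD bipD'; exists (addm (comp i1 p1') (comp i2 p2')).
by split; apply: biproduct_comparisonK.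
Qed.

Lemma biproduct_pr2_iso A B D (i1 : Hom (p:=C) A D) (i2 : Hom B D) p1 p2 :
  isZeroObj A -> isBiproduct i1 i2 p1 p2 -> isIsoHom p2.
Proof.
move=> [_ zeroA] [_ e2 _ _ e5]; exists i2; split => //.
by rewrite -e5 (zeroA _ p1 (zerom D A)) compm0 add0m.
Qed.

Lemma zerom_iso Z Z' : isZeroObj Z -> isZeroObj Z' -> isIsoHom (zerom (p:=C) Z Z').
Proof.
move=> [zeroZ _] [zeroZ' _]; exists (zerom Z' Z).
by split; [apply: zeroZ | apply: zeroZ'].
Qed.

End Preadditive.

Lemma Shom_zerom (C : addcat) (S : autom C) A B : Shom S (zerom A B) = zerom _ _.
Proof. by apply: addm_self_zerom; rewrite -Shom_add add0m. Qed.

Section Sequences.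
Variables (C : addcat) (S : autom C) (n : nat).

Lemma tgtmap_zerom (X Y : nSigSeq S n) i :
  tgtmap S n (fun j => zerom (sobj X j) (sobj Y j)) i = zerom _ _.
Proof. by rewrite /tgtmap /tgt; case: (i.+1 < n) => //; apply: Shom_zerom. Qed.

Lemma isMorAt_zerom (X Y : nSigSeq S n) i :
  isMorAt (fun j => zerom (sobj X j) (sobj Y j)) i.
Proof. by rewrite /isMorAt tgtmap_zerom compm0 comp0m. Qed.

End Sequences.

Section Subcategory.
Variables (n : nat) (C : addcat) (S : autom C) (N NA : nSigSeq S n -> Prop).
Variable P : Ob C -> Prop.
Hypothesis subP : nAngSubcat N P NA.

Lemma nAngSubcat_iso A B (f : Hom A B) : isIsoHom f -> P A -> P B.
Proof. by case: subP => isoP _; apply: isoP. Qed.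

Lemma nAngSubcat_Sob A : P A -> P (Sob S A).
Proof. by case: subP => _ [SP _]; apply: (SP A).1. Qed.

Lemma nAngSubcat_zobj : P (zobj C).
Proof.
case: subP => _ [_ [[Z [PZ zeroZ]] _]].
exact: nAngSubcat_iso (zerom_iso zeroZ (zobj_zero C)) PZ.
Qed.

Lemma nAngSubcat_dsum U V : P U -> P V -> P (dsum U V).
Proof.
case: subP => _ [_ [_ [bipP _]]] PU PV.
have [D [i1 [i2 [p1 [p2 [PD bipD]]]]]] := bipP U V PU PV.
exact: nAngSubcat_iso (biproduct_comparison_iso bipD (dsum_bip U V)) PD.
Qed.

Lemma nAngSubcat_dsumC U V : P (dsum U V) -> P (dsum V U).
Proof.
apply: nAngSubcat_iso.
exact: biproduct_comparison_iso (isBiproduct_sym (dsum_bip U V)) (dsum_bip V U).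
Qed.

Lemma nAngSubcat_dsum_zobj X : P (dsum (zobj C) X) -> P X.
Proof. exact/nAngSubcat_iso/biproduct_pr2_iso/dsum_bip/zobj_zero. Qed.

Lemma cone_trivSeq_obj A X
    (phi : forall i, Hom (sobj (trivSeq S n A) i) (sobj (trivSeq S n X) i)) :
  2 < n -> P A -> P (dsum X A) ->
  forall i, i < n -> i != 1 -> P (sobj (coneSeq phi) i).
Proof.
move=> n_gt2 PA PXA [|[|i]] lt_i_n // _; rewrite /= /cone_obj /tgt /=.
  by rewrite (ltnW n_gt2); apply: nAngSubcat_dsumC.
have P0 := nAngSubcat_zobj.
by case: ifP => _; apply: nAngSubcat_dsum => //; apply: nAngSubcat_Sob.
Qed.

End Subcategory.

Theorem lemma4p3 (n : nat) (hn : 3 <= n) (C : addcat) (S : autom C)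
    (N : nSigSeq S n -> Prop) (hN : nAngulated N)
    (P : Ob C -> Prop) (NA : nSigSeq S n -> Prop) (hA : nAngSubcat N P NA)
    (hcomp : completeSub N P)
    (X A : Ob C) (hAP : P A) (hXA : P (dsum X A)) : P X.
Proof.
case: (hN) => _ [_ [_ [_ [trivN [_ [_ [_ N4]]]]]]].
have [psi [_ _ _ coneN]] := N4 _ _ _ (trivN A I) (trivN X I) (isMorAt_zerom _ _ 0).
have PzX : P (sobj (coneSeq psi) 1).
  exact: hcomp coneN 1 (ltnW hn) (cone_trivSeq_obj hA psi hn hAP hXA).
by move: PzX; rewrite /= /cone_obj /tgt /= hn; exact: (nAngSubcat_dsum_zobj hA).
Qed.
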